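(* Let $B$ be an aperiodic Bratteli diagram of rank $d$. (1) $\mu(\mathcal O_B(1))=1$ if and only if there is a strictly increasing sequence $(n_k)_{k\ge1}$ with $\sum_{k=1}^\infty\mu(G_{n_k}^{n_{k+1},1})=\infty$. (2) Let $1<j\le d$. Then $\mu(\mathcal O_B(j))=1$ if and only if there is a strictly increasing sequence $(n_k)$ with $\sum_k\mu(G_{n_k}^{n_{k+1},j})=\infty$ and, for every $1\le i<j$ and every strictly increasing sequence $(m_k)$, $\sum_k\mu(G_{m_k}^{m_{k+1},i})<\infty$.
   Context: A Bratteli diagram $B$ has levels $V_n$ ($V_0=\{v_0\}$, finite) and finite edge sets $E_n$ from $V_{n-1}$ to $V_n$ with source/range maps $s,r$; $X_B$ is its path space; aperiodic means every tail-equivalence class is infinite. Rank $d$: $\sup_n|V_n|<\infty$ and $d$ is the least integer with $|V_n|=d$ infinitely often. An ordering $\omega$ is a linear order on each $r^{-1}(v)$, $v\ne v_0$; $\mathcal O_B=\prod_{v\ne v_0}P_v$ with $\mu=\prod_v\mu_v$, $\mu_v$ uniform on the set $P_v$ of linear orders of $r^{-1}(v)$. $\mathcal O_B(j)$: orderings with exactly $j$ maximal infinite paths (paths all of whose edges are maximal). For $k<n$ and $1\le i\le d$, $G_k^{n,i}$ is the set of orderings $\omega$ such that the $\omega$-maximal finite paths from level $k$ to the vertices of $V_n$ (for each $v\in V_n$, the path from level $k$ to $v$ consisting of maximal edges) have exactly $i$ distinct sources in $V_k$. *)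

From HB Require Import structures.
From Stdlib Require Import List.
From mathcomp Require Import all_boot all_order all_algebra.
Unset Implicit Arguments. Unset Strict Implicit. Unset Printing Implicit Defensive.
Import Order.TTheory GRing.Theory Num.Theory.

(* The edge set
   between level n and level n+1 (the paper's E_(n+1)) is 'I_(ne n),
   with source map src n into level n and range map rng n into level n+1. *)
Record bratteli := Bratteli {
  nV : nat -> nat;
  ne : nat -> nat;
  src : forall n, 'I_(ne n) -> 'I_(nV n);
  rng : forall n, 'I_(ne n) -> 'I_(nV n.+1)
}.

Definition is_bratteli (B : bratteli) : Prop :=
  nV B 0 = 1%N /\
  (forall n (v : 'I_(nV B n)), exists e, src B n e = v) /\
  (forall n (v : 'I_(nV B n.+1)), exists e, rng B n e = v).

Definition pathT (B : bratteli) := forall n, 'I_(ne B n).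
Definition is_path (B : bratteli) (x : pathT B) : Prop :=
  forall n, rng B n (x n) = src B n.+1 (x n.+1).

Definition tail_equiv (B : bratteli) (x y : pathT B) : Prop :=
  exists N, forall n, (N <= n)%N -> x n = y n.

(* Aperiodic: every tail-equivalence class (of paths) is infinite:
   no finite list of paths exhausts it. *)
Definition aperiodic (B : bratteli) : Prop :=
  forall x : pathT B, is_path B x ->
  forall l : list (pathT B), exists y : pathT B,
    is_path B y /\ tail_equiv B x y /\ List.Forall (fun z => exists n, y n <> z n) l.

Definition is_rank (B : bratteli) (d : nat) : Prop :=
  (exists M, forall n, (nV B n <= M)%N) /\
  (forall N, exists n, (N <= n)%N /\ nV B n = d) /\
  (forall d', (d' < d)%N -> exists N, forall n, (N <= n)%N -> nV B n <> d').

(* The linear orders on r^{-1}(v) for all v in level n+1 are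
   encoded together as a function f : edges -> positions, whose restriction
   to each r^{-1}(v) is a bijection onto {0,..,|r^{-1}(v)|-1}. *)
Definition cnt (B : bratteli) n (v : 'I_(nV B n.+1)) : nat :=
  #|[set e : 'I_(ne B n) | rng B n e == v]|.

Definition Lvl (B : bratteli) n := {ffun 'I_(ne B n) -> 'I_(ne B n)}.

Definition valid_lvl (B : bratteli) n (f : Lvl B n) : bool :=
  [forall e, (f e < cnt B n (rng B n e))%N] &&
  [forall e1, forall e2,
     ((rng B n e1 == rng B n e2) && (f e1 == f e2)) ==> (e1 == e2)].

Definition LO (B : bratteli) n : {set Lvl B n} := [set f | valid_lvl B n f].

Definition OrdT (B : bratteli) := forall n, Lvl B n.
Definition valid_ord (B : bratteli) (w : OrdT B) : Prop := forall n, w n \in LO B n.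

Definition is_max_edge (B : bratteli) (w : OrdT B) n (e : 'I_(ne B n)) : bool :=
  nat_of_ord (w n e) == (cnt B n (rng B n e)).-1.

Definition is_max_path (B : bratteli) (w : OrdT B) (x : pathT B) : Prop :=
  is_path B x /\ forall n, is_max_edge B w n (x n).

Definition OBj (B : bratteli) (j : nat) (w : OrdT B) : Prop :=
  exists l : list (pathT B),
    List.length l = j /\
    List.Forall (is_max_path B w) l /\
    List.NoDup l /\
    (forall x, is_max_path B w x ->
       exists y, List.In y l /\ forall n, x n = y n) /\
    (forall y z, List.In y l -> List.In z l -> (forall n, y n = z n) -> y = z).

(* The product measure mu on O_B.
   Elementary cylinder: orderings agreeing with c on levels < N;
   its measure is prod_{m<N} [c m valid] / |LO m|. *)
Local Open Scope ring_scope.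

Definition cyl_meas (B : bratteli) (N : nat) (c : OrdT B) : rat :=
  \prod_(m < N) (if c m \in LO B m then (#|LO B m|%:R)^-1 else 0).

Definition in_cyl (B : bratteli) (N : nat) (c w : OrdT B) : Prop :=
  forall m, (m < N)%N -> w m = c m.

Definition mu_null (B : bratteli) (A : OrdT B -> Prop) : Prop :=
  forall eps : rat, 0 < eps ->
  exists (N : nat -> nat) (c : nat -> OrdT B),
    (forall w, A w -> exists i, in_cyl B (N i) (c i) w) /\
    (forall K, \sum_(i < K) cyl_meas B (N i) (c i) <= eps).

Definition mu_one (B : bratteli) (A : OrdT B -> Prop) : Prop :=
  mu_null B (fun w => valid_ord B w /\ ~ A w).

(* Finite-dimensional integration over the levels k, ..., k+d-1. *)
Definition upd (B : bratteli) (w : OrdT B) m (f : Lvl B m) : OrdT B :=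
  fun m' => match m =P m' with
            | ReflectT e => match e in _ = k return Lvl B k with erefl => f end
            | ReflectF _ => w m'
            end.

Fixpoint integ (B : bratteli) (F : OrdT B -> rat) (k d : nat) : OrdT B -> rat :=
  match d with
  | 0 => F
  | d'.+1 => fun w =>
      (\sum_(f in LO B (d' + k)) integ B F k d' (upd B w (d' + k) f)) / #|LO B (d' + k)|%:R
  end.

Definition ord0T (B : bratteli) : OrdT B := fun n => [ffun e => e].

(* maxreach w d k u v : the omega-maximal finite path ending at v in level
   d+k passes through u in level k. *)
Fixpoint maxreach (B : bratteli) (w : OrdT B) (d k : nat) :
    'I_(nV B k) -> 'I_(nV B (d + k)) -> bool :=
  match d return 'I_(nV B k) -> 'I_(nV B (d + k)) -> bool with
  | 0 => fun u v => u == v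
  | d'.+1 => fun u v =>
      [exists e : 'I_(ne B (d' + k)),
         [&& rng B _ e == v, is_max_edge B w _ e & maxreach B w d' k u (src B _ e)]]
  end.

Definition max_sources (B : bratteli) (w : OrdT B) (k d : nat) : {set 'I_(nV B k)} :=
  [set u | [exists v : 'I_(nV B (d + k)), maxreach B w d k u v]].

(* mu(G_k^{n,i}) with n = k + d: G depends only on levels k..n-1. *)
Definition muG_d (B : bratteli) (k d i : nat) : rat :=
  integ B (fun w => ((#|max_sources B w k d| == i) : nat)%:R) k d (ord0T B).

Definition muG (B : bratteli) (k n i : nat) : rat := muG_d B k (n - k) i.

Definition strictly_increasing (n : nat -> nat) : Prop := forall k, (n k < n k.+1)%N.

Definition series_diverges (a : nat -> rat) : Prop :=
  forall M : rat, exists K, M < \sum_(k < K) a k.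

Definition series_converges (a : nat -> rat) : Prop :=
  exists M : rat, forall K, \sum_(k < K) a k <= M.

From Stdlib Require Import List.
From mathcomp Require Import all_boot all_order all_algebra.
From mathcomp Require Import ring lra zify.
From Stdlib Require Import Classical ClassicalEpsilon ChoiceFacts FunctionalExtensionality.
Unset Implicit Arguments. Unset Strict Implicit. Unset Printing Implicit Defensive.
Import Order.TTheory GRing.Theory Num.Theory.

(* For a valid ordering, maximal edges define maps from each level down to
   the previous one; the number of maximal paths is the eventual size of
   [sources k t], the endpoints at level k of the maximal paths starting at
   level k+t.  The two probabilistic facts are then
   (a) if sum_k mu(G_(n k)^(n (k+1), i)) diverges, almost every ordering has
       at most i maximal paths (second Borel-Cantelli lemma, the blocks
       [n k, n (k+1)) being independent);
   (b) if these series converge along every sequence, almost no ordering has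
       exactly i maximal paths.
   Both parts of the theorem follow from (a) and (b) for every j. *)

Local Open Scope ring_scope.

(* Integration over finitely many levels.  [integ B F k d w] averages F over
   all valid choices of the levels k, ..., k+d-1 of w, the other levels of w
   being kept fixed: it is the conditional expectation of F with respect to
   the product measure mu. *)
Section Integration.
Variable B : bratteli.

Lemma upd_same (w : OrdT B) m f : upd B w m f m = f.
Proof. by rewrite /upd; case: eqP => // e; rewrite (eq_irrelevance e erefl). Qed.

Lemma upd_other (w : OrdT B) m f m' : m <> m' -> upd B w m f m' = w m'.
Proof. by rewrite /upd; case: eqP. Qed.

Definition depends (S : nat -> Prop) (F : OrdT B -> rat) : Prop :=
  forall w w', (forall m, S m -> w m = w' m) -> F w = F w'.

Lemma depends_weaken (S S' : nat -> Prop) F :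
  (forall m, S m -> S' m) -> depends S F -> depends S' F.
Proof. by move=> h dF w w' ag; apply: dF => m /h; apply: ag. Qed.

Lemma integS F k d w : integ B F k d.+1 w =
  (\sum_(f in LO B (d + k)) integ B F k d (upd B w (d + k) f)) / #|LO B (d + k)|%:R.
Proof. by []. Qed.

Lemma integ_ext F G k d w :
  (forall w, F w = G w) -> integ B F k d w = integ B G k d w.
Proof. by move=> h; have -> : F = G by apply: functional_extensionality. Qed.

(* Every level carries a valid ordering: order each fibre r^{-1}(v) by the
   indices of its edges.  [fibre_rank m e] is the position of e in its fibre. *)
Definition fibre_rank m (e : 'I_(ne B m)) : nat :=
  #|[set e' : 'I_(ne B m) | (rng B m e' == rng B m e) && (e' < e)%N]|.

Lemma fibre_rank_lt_cnt m e : (fibre_rank m e < cnt B m (rng B m e))%N.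
Proof.
rewrite /fibre_rank /cnt; apply: proper_card; apply/properP; split.
  by apply/subsetP=> x; rewrite !inE => /andP[->].
by exists e; rewrite !inE ?eqxx ?ltnn.
Qed.

Lemma cnt_le m v : (cnt B m v <= ne B m)%N.
Proof. by rewrite /cnt; apply: leq_trans (max_card _) _; rewrite card_ord. Qed.

Definition index_order m : Lvl B m :=
  [ffun e => Ordinal (leq_trans (fibre_rank_lt_cnt m e) (cnt_le _ _))].

Lemma fibre_rank_mono m (a b : 'I_(ne B m)) :
  rng B m a = rng B m b -> (a < b)%N -> (fibre_rank m a < fibre_rank m b)%N.
Proof.
move=> rab ab; rewrite /fibre_rank; apply: proper_card; apply/properP; split.
  apply/subsetP=> x; rewrite !inE => /andP[/eqP -> xa].
  by rewrite rab eqxx /= (ltn_trans xa ab).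
by exists a; rewrite !inE ?rab ?eqxx ?ltnn.
Qed.

Lemma index_order_valid m : index_order m \in LO B m.
Proof.
rewrite inE /valid_lvl; apply/andP; split.
  by apply/forallP=> e; rewrite ffunE /= fibre_rank_lt_cnt.
apply/forallP=> e1; apply/forallP=> e2; apply/implyP=> /andP[/eqP r12].
rewrite !ffunE => /eqP[] h.
case: (ltngtP e1 e2) => [lt|lt|eq]; last by apply/eqP/val_inj.
  by move: (fibre_rank_mono _ _ _ r12 lt); rewrite h ltnn.
by move: (fibre_rank_mono _ _ _ (esym r12) lt); rewrite h ltnn.
Qed.

Lemma LO_pos m : (0 < #|LO B m|)%N.
Proof. by apply/card_gt0P; exists (index_order m); exact: index_order_valid. Qed.

Lemma LO_neq0 m : (#|LO B m|%:R : rat) != 0.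
Proof. by rewrite pnatr_eq0 -lt0n LO_pos. Qed.

Lemma integ_pull (S : nat -> Prop) G F k d w :
  depends S G -> (forall m, S m -> ~ (k <= m < d + k)%N) ->
  integ B (fun w => G w * F w) k d w = G w * integ B F k d w.
Proof.
move=> dG dis; elim: d w dis => [|d IH] w dis //.
have dis' : forall m, S m -> ~ (k <= m < d + k)%N.
  by move=> m Sm H; apply: (dis m Sm); move: H; rewrite addSn; lia.
rewrite !integS mulrA big_distrr /=; congr (_ / _); apply: eq_bigr => f _.
rewrite IH //; congr (_ * _); apply: dG => m Sm.
by rewrite upd_other // => E; apply: (dis m Sm); rewrite -E; lia.
Qed.

Lemma integ_one k d w : integ B (fun _ => 1) k d w = 1.
Proof.
elim: d w => [|d IH] w //; rewrite integS.
under eq_bigr do rewrite IH.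
by rewrite sumr_const -[_ *+ _]mulr_natl mulr1 divff // LO_neq0.
Qed.

Lemma integ_indep (S : nat -> Prop) F k d w :
  depends S F -> (forall m, S m -> ~ (k <= m < d + k)%N) -> integ B F k d w = F w.
Proof.
move=> dF dis; have := integ_pull S F (fun _ => 1) k d w dF dis.
by rewrite integ_one mulr1 => <-; apply: integ_ext => ?; rewrite mulr1.
Qed.

Lemma integ_cst c k d w : integ B (fun _ => c) k d w = c.
Proof. by apply: (integ_indep (fun _ => False)). Qed.

Lemma integ_scale c F k d w : integ B (fun w => c * F w) k d w = c * integ B F k d w.
Proof. by apply: (integ_pull (fun _ => False) (fun _ => c)). Qed.

Lemma integ_add F G k d w :
  integ B (fun w => F w + G w) k d w = integ B F k d w + integ B G k d w.
Proof.
elim: d w => [|d IH] w //; rewrite !integS.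
by under eq_bigr do rewrite IH; rewrite big_split /= mulrDl.
Qed.

Lemma integ_sum (I : Type) (r : seq I) (F : I -> OrdT B -> rat) k d w :
  integ B (fun w => \sum_(i <- r) F i w) k d w = \sum_(i <- r) integ B (F i) k d w.
Proof.
elim: r => [|i r IH].
  by rewrite big_nil -[RHS](integ_cst 0 k d w); apply: integ_ext => ?; rewrite big_nil.
by rewrite big_cons -IH -integ_add; apply: integ_ext => ?; rewrite big_cons.
Qed.

Lemma integ_depends (S : nat -> Prop) F k d :
  depends S F -> depends (fun m => S m /\ ~ (k <= m < d + k)%N) (integ B F k d).
Proof.
move=> dF; elim: d => [|d IH] w w' h /=.
  by apply: dF => m Sm; apply: h; split=> //; lia.
congr (_ / _); apply: eq_bigr => f _; apply: IH => m [Sm nm].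
case: (eqVneq m (d + k)) => [->|ne]; first by rewrite !upd_same.
rewrite !upd_other; try by apply/eqP; rewrite eq_sym.
by apply: h; split=> //; rewrite addSn; move: ne => /eqP; lia.
Qed.

Lemma integ_le F G k d w :
  (forall w', (forall m, (k <= m < d + k)%N -> w' m \in LO B m) ->
     (forall m, ~ (k <= m < d + k)%N -> w m = w' m) -> F w' <= G w') ->
  integ B F k d w <= integ B G k d w.
Proof.
elim: d w => [|d IH] w h /=; first by apply: h => m; [lia|].
rewrite ler_pM2r ?invr_gt0 ?ltr0n ?LO_pos //.
apply: ler_sum => f fLO; apply: IH => w' vb ag; apply: h.
  move=> m hm; case: (eqVneq m (d + k)) => [->|ne].
    by rewrite -(ag (d + k)) ?upd_same //; lia.
  by apply: vb; move: ne hm => /eqP; rewrite addSn; lia.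
move=> m hm; rewrite -ag; last by rewrite addSn in hm; lia.
by rewrite upd_other //; rewrite addSn in hm; lia.
Qed.

Lemma integ_ge0 F k d w : (forall w, 0 <= F w) -> 0 <= integ B F k d w.
Proof. by move=> h; rewrite -(integ_cst 0 k d w); apply: integ_le => w' _ _. Qed.

Lemma integ_01 F k d w : (forall w, 0 <= F w <= 1) -> 0 <= integ B F k d w <= 1.
Proof.
move=> h; apply/andP; split.
  by rewrite -(integ_cst 0 k d w); apply: integ_le => u _ _; case/andP: (h u).
by rewrite -(integ_cst 1 k d w); apply: integ_le => u _ _; case/andP: (h u).
Qed.

Lemma integ_split F k d1 d2 w :
  integ B F k (d1 + d2) w = integ B (integ B F k d1) (d1 + k) d2 w.
Proof.
elim: d2 w => [|d2 IH] w; first by rewrite addn0.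
rewrite addnS integS [RHS]integS.
under eq_bigr do rewrite IH.
by rewrite (_ : d2 + (d1 + k) = d1 + d2 + k)%N; last lia.
Qed.

Lemma integ_block F k M M' w w' : (M <= M')%N ->
  depends (fun m => (k <= m < M + k)%N) F -> integ B F k M' w = integ B F k M w'.
Proof.
move=> hM dF.
have dI : depends (fun _ => False) (integ B F k M).
  apply: depends_weaken (integ_depends _ F k M dF) => m [hm h]; exact: h.
rewrite -(subnKC hM) integ_split (integ_indep (fun _ => False) _ _ _ _ dI) //.
exact: dI.
Qed.

Lemma integ_shift F k M w w' : depends (fun m => (k <= m < M + k)%N) F ->
  integ B F 0 (k + M) w = integ B F k M w'.
Proof.
move=> dF; rewrite integ_split (integ_ext _ F); last first.
  by move=> u; apply: (integ_indep (fun m => (k <= m < M + k)%N)) => // m hm; lia.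
by rewrite addn0; apply: integ_block.
Qed.

End Integration.

Lemma In_mem (T : eqType) (x : T) (s : seq T) : List.In x s <-> x \in s.
Proof.
elim: s => [|a s IH] //=; rewrite inE IH; split.
  by case=> [->|->]; rewrite ?eqxx ?orbT.
by case/orP=> [/eqP ->|]; auto.
Qed.

(* Stdlib membership lemmas, stated for the seq operations so that they
   can be used as views. *)
Lemma In_flatten (T : Type) (x : T) (ss : seq (seq T)) :
  List.In x (flatten ss) <-> exists s, List.In s ss /\ List.In x s.
Proof. exact: in_concat. Qed.

Lemma In_map (T U : Type) (f : T -> U) y (s : seq T) :
  List.In y (map f s) <-> exists x, f x = y /\ List.In x s.
Proof. exact: in_map_iff. Qed.

Lemma In_nth (T : Type) (x0 x : T) (s : seq T) :
  List.In x s -> exists q, (q < size s)%N /\ nth x0 s q = x.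
Proof.
elim: s => [|a s IH] //= [<-|h]; first by exists 0%N.
by have [q [h1 h2]] := IH h; exists q.+1.
Qed.

Lemma eq_big_In (T : Type) (s : seq T) (f g : T -> rat) :
  (forall x, List.In x s -> f x = g x) -> \sum_(x <- s) f x = \sum_(x <- s) g x.
Proof.
elim: s => [|a s IH] h; first by rewrite !big_nil.
by rewrite !big_cons h /=; auto; rewrite IH // => x hx; apply: h; right.
Qed.

Lemma ler_sum_In (T : Type) (s : seq T) (f : T -> rat) x :
  (forall y, 0 <= f y) -> List.In x s -> f x <= \sum_(y <- s) f y.
Proof.
move=> h; elim: s => [|a s IH] //= [->|hx]; rewrite big_cons.
  by rewrite lerDl sumr_ge0.
by rewrite (le_trans (IH hx)) // lerDr.
Qed.

(* Summation along anti-diagonals, used to merge countably many countable covers. *)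
Lemma sum_antidiagonal (V : nmodType) (a : nat -> nat -> V) J :
  \sum_(0 <= n < J) \sum_(0 <= j < n.+1) a j (n - j)%N =
  \sum_(0 <= j < J) \sum_(0 <= t < J - j) a j t.
Proof.
elim: J => [|J IH]; first by rewrite !big_geq.
rewrite big_nat_recr //= IH [RHS]big_nat_recr //= subSnn big_nat1.
have -> : \sum_(0 <= j < J) \sum_(0 <= t < J.+1 - j) a j t =
   \sum_(0 <= j < J) (\sum_(0 <= t < J - j) a j t + a j (J - j)%N).
  apply: eq_big_nat => j /andP[_ hj]; rewrite subSn; last by lia.
  by rewrite big_nat_recr.
by rewrite big_split /= -addrA big_nat_recr //= subnn.
Qed.

Lemma sum_geometric (R : realFieldType) (eps : R) J : 0 <= eps ->
  \sum_(0 <= j < J) eps / 2 ^+ j.+1 <= eps.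
Proof.
move=> he; suff -> : \sum_(0 <= j < J) eps / 2 ^+ j.+1 = eps - eps / 2 ^+ J.
  by rewrite lerBlDr lerDl divr_ge0 // exprn_ge0.
elim: J => [|J IH]; first by rewrite big_geq // expr0 divr1 subrr.
by rewrite big_nat_recr //= IH exprS; field; rewrite expf_neq0 // pnatr_eq0.
Qed.

(* This is the
   outer-measure-zero notion of [mu_null], in a form closed under countable
   unions. *)
Section Covers.
Variable B : bratteli.

Fixpoint configs (N : nat) (w : OrdT B) : seq (OrdT B) :=
  match N with
  | 0 => [:: w]
  | N'.+1 => flatten [seq configs N' (upd B w N' f) | f <- enum (LO B N')]
  end.

Definition cyl_weight N : rat := \prod_(m < N) (#|LO B m|%:R)^-1.

Lemma integ_configs F N w : integ B F 0 N w = cyl_weight N * \sum_(c <- configs N w) F c.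
Proof.
elim: N w => [|N IH] w; first by rewrite /cyl_weight big_ord0 big_seq1 mul1r.
rewrite integS addn0 /= big_flatten /= big_map big_enum /=.
under eq_bigr do rewrite IH.
by rewrite -big_distrr /= /cyl_weight big_ord_recr /= mulrC; lra.
Qed.

Definition valid_below (w : OrdT B) N := forall m, (m < N)%N -> w m \in LO B m.

Lemma configs_valid N w c : List.In c (configs N w) ->
  valid_below c N /\ (forall m, (N <= m)%N -> c m = w m).
Proof.
elim: N w => [|N IH] w /=; first by case=> // <-; split=> // m; lia.
case/In_flatten=> s [/In_map [f [<- fin]] cin].
have [h1 h2] := IH _ cin.
have fLO : f \in LO B N by move: fin; rewrite In_mem mem_enum.
split.
  move=> m; rewrite ltnS leq_eqVlt => /orP[/eqP ->|]; last exact: h1.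
  by rewrite h2 // upd_same.
by move=> m hm; rewrite h2 ?upd_other //; lia.
Qed.

Lemma configs_cover N w w' : valid_below w' N ->
  exists c, List.In c (configs N w) /\ forall m, (m < N)%N -> c m = w' m.
Proof.
elim: N w => [|N IH] w vw; first by exists w; split=> //=; auto.
have vw' : valid_below w' N by move=> m hm; apply: vw; lia.
have [c [cin cag]] := IH (upd B w N (w' N)) vw'.
exists c; split.
  apply/In_flatten; exists (configs N (upd B w N (w' N))); split=> //.
  apply/In_map; exists (w' N); split=> //; rewrite In_mem mem_enum; exact: vw.
move=> m; rewrite ltnS leq_eqVlt => /orP[/eqP ->|]; last exact: cag.
by have [_ ->] := configs_valid _ _ _ cin; rewrite ?upd_same.
Qed.

Lemma cyl_meas_valid N c : valid_below c N -> cyl_meas B N c = cyl_weight N.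
Proof. by move=> v; apply: eq_bigr => m _; rewrite v. Qed.

Lemma cyl_meas_ge0 N c : 0 <= cyl_meas B N c.
Proof. by apply: prodr_ge0 => m _; case: ifP => // _; rewrite invr_ge0 ler0n. Qed.

(* A cylinder is given by a depth N and an ordering c: the orderings
   agreeing with c below level N.  [total s] is the total measure of a list. *)
Definition cyl := (nat * OrdT B)%type.
Definition cmeas (x : cyl) := cyl_meas B x.1 x.2.
Definition total (s : seq cyl) := \sum_(x <- s) cmeas x.

Definition covered (A : OrdT B -> Prop) (e : rat) := exists L : nat -> seq cyl,
  (forall w, A w -> exists j x, List.In x (L j) /\ in_cyl B x.1 x.2 w) /\
  forall J, \sum_(0 <= j < J) total (L j) <= e.

Definition null (A : OrdT B -> Prop) := forall eps, 0 < eps -> covered A eps.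

Lemma covered_sub (A A' : OrdT B -> Prop) e :
  (forall w, A w -> A' w) -> covered A' e -> covered A e.
Proof. by move=> h [L [c s]]; exists L; split=> // w /h; exact: c. Qed.

Lemma covered_le (A : OrdT B -> Prop) e e' : e <= e' -> covered A e -> covered A e'.
Proof. by move=> h [L [c s]]; exists L; split=> // J; exact: le_trans (s J) h. Qed.

Definition ind (b : bool) : rat := (b : nat)%:R.

Lemma ind01 b : 0 <= ind b <= 1.
Proof. by case: b; rewrite /ind /= ?ler01 ?lexx. Qed.

Lemma covered_finite (E : OrdT B -> bool) N :
  (forall w w', (forall m, (m < N)%N -> w m = w' m) -> E w = E w') ->
  covered (fun w => valid_below w N /\ E w) (integ B (fun w => ind (E w)) 0 N (ord0T B)).
Proof.
move=> dE; pose cyls := [seq (N, c) | c <- configs N (ord0T B) & E c].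
exists (fun j => if j is 0 then cyls else [::]); split.
  move=> w [vw Ew]; have [c [cin cag]] := configs_cover N (ord0T B) w vw.
  exists 0%N, (N, c); split; last by move=> m hm /=; rewrite cag.
  apply/In_map; exists c; split=> //; apply/filter_In; split=> //.
  by rewrite (dE c w).
have tot0 : total cyls = integ B (fun w => ind (E w)) 0 N (ord0T B).
  rewrite integ_configs /total big_map big_filter big_mkcond /= big_distrr /=.
  apply: eq_big_In => c cin; have [vc _] := configs_valid _ _ _ cin.
  by rewrite /ind; case: (E c); rewrite /cmeas /= ?cyl_meas_valid ?mulr1 ?mulr0.
case=> [|J]; first by rewrite big_geq // integ_ge0 // => w; case/andP: (ind01 (E w)).
by rewrite big_nat_recl // tot0 big1_seq ?addr0 // => j _; rewrite /total big_nil.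
Qed.

Lemma covered_union (A : nat -> OrdT B -> Prop) (e : nat -> rat) e' :
  (forall j, covered (A j) (e j)) -> (forall J, \sum_(0 <= j < J) e j <= e') ->
  covered (fun w => exists j, A j w) e'.
Proof.
move=> hc he; have [L hL] := choice _ hc.
exists (fun n => flatten [seq L j (n - j)%N | j <- iota 0 n.+1]); split.
  move=> w [j Aw]; have [t [x [xin xc]]] := (hL j).1 w Aw.
  exists (j + t)%N, x; split=> //; apply/In_flatten; exists (L j t); split=> //.
  apply/In_map; exists j; split; first by congr L; lia.
  by rewrite In_mem mem_iota; lia.
move=> J.
have -> : \sum_(0 <= n < J) total (flatten [seq L j (n - j)%N | j <- iota 0 n.+1]) =
   \sum_(0 <= n < J) \sum_(0 <= j < n.+1) total (L j (n - j)%N).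
  by apply: eq_bigr => n _; rewrite /total big_flatten big_map.
move: (sum_antidiagonal _ (fun j t => total (L j t)) J) => /= ->.
by apply: le_trans (he J); apply: ler_sum => j _; exact: (hL j).2.
Qed.

Lemma null_sub (A A' : OrdT B -> Prop) : (forall w, A w -> A' w) -> null A' -> null A.
Proof. by move=> h n eps ep; exact: covered_sub h (n eps ep). Qed.

Lemma null_union (A : nat -> OrdT B -> Prop) :
  (forall j, null (A j)) -> null (fun w => exists j, A j w).
Proof.
move=> h eps ep; apply: (covered_union A (fun j => eps / 2 ^+ j.+1)).
  by move=> j; apply: h; rewrite divr_gt0 // exprn_gt0.
by move=> J; apply: sum_geometric; rewrite ltW.
Qed.

Lemma null_or (A A' : OrdT B -> Prop) : null A -> null A' -> null (fun w => A w \/ A' w).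
Proof.
move=> h1 h2; apply: (null_sub _ (fun w => exists j, if j is 0 then A w else A' w)).
  by move=> w [a|a]; [exists 0%N | exists 1%N].
by apply: null_union => -[|j].
Qed.

(* A [mu_null] set is null: each cylinder of the sequence is its own list. *)
Lemma null_of_mu_null (A : OrdT B -> Prop) : mu_null B A -> null A.
Proof.
move=> h eps ep; have [N [c [hc hs]]] := h eps ep.
exists (fun j => [:: (N j, c j)]); split.
  by move=> w Aw; have [i hi] := hc w Aw; exists i, (N i, c i); split=> //; left.
move=> J; rewrite big_mkord; apply: le_trans (hs J); apply: ler_sum => i _.
by rewrite /total big_seq1.
Qed.

(* Conversely a null set is [mu_null], provided some cylinder has measure 0:
   the countably many lists of a cover are concatenated into one sequence,
   the blocks being separated by the measure-0 cylinder x0 (so that the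
   sequence is infinite even when the lists are empty). *)
Section Enumerate.
Variable x0 : cyl.
Variable L : nat -> seq cyl.

Definition enum_upto K := flatten [seq x0 :: L j | j <- iota 0 K].

Lemma enum_uptoS K : enum_upto K.+1 = enum_upto K ++ (x0 :: L K).
Proof. by rewrite /enum_upto -addn1 iotaD map_cat flatten_cat /= cats0 add0n. Qed.

Lemma enum_upto_size K : (K <= size (enum_upto K))%N.
Proof. by elim: K => [|K IH] //; rewrite enum_uptoS size_cat /=; lia. Qed.

Lemma enum_upto_prefix K K' : (K <= K')%N -> exists t, enum_upto K' = enum_upto K ++ t.
Proof.
move=> h; rewrite -(subnKC h); elim: (K' - K)%N => [|n [t IH]].
  by exists [::]; rewrite addn0 cats0.
by exists (t ++ x0 :: L (K + n)%N); rewrite addnS enum_uptoS IH catA.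
Qed.

Lemma enum_upto_nth K K' q : (K <= K')%N -> (q < size (enum_upto K))%N ->
  nth x0 (enum_upto K') q = nth x0 (enum_upto K) q.
Proof. by move=> h hq; have [t ->] := enum_upto_prefix K K' h; rewrite nth_cat hq. Qed.

Lemma enum_upto_total K :
  total (enum_upto K) = \sum_(0 <= j < K) (cmeas x0 + total (L j)).
Proof.
elim: K => [|K IH]; first by rewrite /total /enum_upto /= big_nil big_geq.
by rewrite enum_uptoS /total big_cat /= big_cons -/(total _) IH big_nat_recr.
Qed.

Definition enum_nth i := nth x0 (enum_upto i.+1) i.

Lemma enum_nth_In j x : List.In x (L j) -> exists q, enum_nth q = x.
Proof.
move=> xin; have : List.In x (enum_upto j.+1).
  by rewrite enum_uptoS; apply/in_app_iff; right; right.
case/(In_nth _ x0) => q [qs qx]; exists q; rewrite /enum_nth.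
case: (leqP q.+1 j.+1) => h.
  by rewrite -(enum_upto_nth q.+1 j.+1 q h) ?qx // (enum_upto_size q.+1).
by rewrite (enum_upto_nth j.+1 q.+1 q) ?qx // ltnW.
Qed.

Lemma enum_nth_sum K : \sum_(i < K) cmeas (enum_nth i) <= total (enum_upto K).
Proof.
have -> : \sum_(i < K) cmeas (enum_nth i) = \sum_(0 <= i < K) cmeas (nth x0 (enum_upto K) i).
  rewrite -(big_mkord xpredT (fun i => cmeas (enum_nth i))).
  apply: eq_big_nat => i /andP[_ hi]; rewrite /enum_nth.
  by rewrite (enum_upto_nth i.+1 K) // (leq_trans _ (enum_upto_size _)).
rewrite /total (big_nth x0) (@big_cat_nat _ _ _ K 0 (size (enum_upto K))) ?enum_upto_size //=.
by rewrite lerDl sumr_ge0 // => i _; apply: cyl_meas_ge0.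
Qed.
End Enumerate.

Lemma mu_null_of_null (A : OrdT B -> Prop) :
  (exists x0 : cyl, cmeas x0 = 0) -> null A -> mu_null B A.
Proof.
move=> [x0 hx0] hn eps ep; have [L [hc hs]] := hn eps ep.
exists (fun i => (enum_nth x0 L i).1), (fun i => (enum_nth x0 L i).2); split.
  move=> w Aw; have [j [x [xin xc]]] := hc w Aw.
  by have [q hq] := enum_nth_In x0 L j x xin; exists q; rewrite hq.
move=> K; apply: le_trans (enum_nth_sum x0 L K) _.
by rewrite enum_upto_total; under eq_bigr do rewrite hx0 add0r; exact: hs.
Qed.

End Covers.

(* Since O_B is a product of finite sets it
   is compact: a cover by cylinders has a finite subcover, and a finite cover
   by cylinders of total measure < 1 is impossible because the integral of
   the indicators is at least 1. *)
Section NotNull.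
Variable B : bratteli.

Definition make_valid (w : OrdT B) : OrdT B :=
  fun m => if w m \in LO B m then w m else index_order B m.

Lemma make_valid_valid w : valid_ord B (make_valid w).
Proof. by move=> m; rewrite /make_valid; case: ifP => // _; apply: index_order_valid. Qed.

Section Compactness.
Variable P : nat -> OrdT B -> Prop.
Variable lev : nat -> nat.
Hypothesis P_depends : forall i w w',
  (forall m, (m < lev i)%N -> w m = w' m) -> P i w -> P i w'.

Definition uncovered n (p : OrdT B) := forall K, exists w, valid_ord B w /\
  (forall m, (m < n)%N -> w m = p m) /\ forall i, (i < K)%N -> ~ P i w.

(* Koenig's lemma: an uncovered cylinder has an uncovered sub-cylinder, as
   it is the finite union of its sub-cylinders. *)
Lemma uncovered_step n p : uncovered n p ->
  exists f, f \in LO B n /\ uncovered n.+1 (upd B p n f).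
Proof.
move=> bp; apply: NNPP => h.
have h' : forall f : Lvl B n, exists K, f \in LO B n -> forall w, valid_ord B w ->
    (forall m, (m < n.+1)%N -> w m = upd B p n f m) -> exists i, (i < K)%N /\ P i w.
  move=> f; case: (boolP (f \in LO B n)) => fl; last by exists 0%N.
  apply: NNPP => hf; apply: h; exists f; split=> // K.
  apply: NNPP => hK2; apply: hf; exists K => _ w vw ag; apply: NNPP => hh; apply: hK2.
  by exists w; split=> //; split=> // i hi hc; apply: hh; exists i.
have [Kf hKf] := choice _ h'.
have [w [vw [ag nc]]] := bp (\max_(f in LO B n) Kf f).
have [|i [hi ci]] := hKf (w n) (vw n) w vw.
  move=> m; rewrite ltnS leq_eqVlt => /orP[/eqP ->|hm]; first by rewrite upd_same.
  by rewrite upd_other ?ag //; lia.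
by apply: (nc i _ ci); apply: leq_trans hi _; apply: (leq_bigmax_cond _ (vw n)).
Qed.

Lemma compactness :
  (forall w, valid_ord B w -> exists i, P i w) ->
  exists K, forall w, valid_ord B w -> exists i, (i < K)%N /\ P i w.
Proof.
move=> hcov; apply: NNPP => hK.
have unc0 : uncovered 0%N (ord0T B).
  move=> K; apply: NNPP => h; apply: hK; exists K => w vw; apply: NNPP => h2; apply: h.
  by exists w; split=> //; split=> // i hi hc; apply: h2; exists i.
have hex : forall np : nat * OrdT B, exists f : Lvl B np.1,
    uncovered np.1 np.2 -> f \in LO B np.1 /\ uncovered np.1.+1 (upd B np.2 np.1 f).
  move=> [n p] /=; case: (classic (uncovered n p)) => b.
    by have [f hf] := uncovered_step n p b; exists f.
  by exists (index_order B n).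
have [st hst] := non_dep_dep_functional_choice choice _ _ hex.
pose fix branch n := if n is n'.+1 then upd B (branch n') n' (st (n', branch n')) else ord0T B.
have unc : forall n, uncovered n (branch n).
  by elim=> [|n IH] //=; exact: (hst (n, branch n) IH).2.
pose w m := branch m.+1 m.
have branch_w : forall n m, (m < n)%N -> branch n m = w m.
  elim=> [|n IH] m hm //; rewrite /= /w.
  case: (eqVneq m n) => [->|ne] //.
  rewrite upd_other; last by apply/eqP; rewrite eq_sym.
  by rewrite IH //; move: ne => /eqP; lia.
have vw : valid_ord B w.
  by move=> m; rewrite /w /= upd_same; exact: (hst (m, branch m) (unc m)).1.
have [i ci] := hcov w vw.
have [w' [vw' [ag nc]]] := unc (lev i) i.+1.
apply: (nc i (ltnSn i)); apply: (P_depends i w) ci => m hm.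
by rewrite ag // branch_w.
Qed.

End Compactness.

Definition cyl_ind N (c w : OrdT B) : rat := \prod_(m < N) ind (w m == c m).

Lemma cyl_ind_in N c w : in_cyl B N c w -> cyl_ind N c w = 1.
Proof. by move=> h; apply: big1 => m _; rewrite h // eqxx. Qed.

Lemma cyl_ind_ge0 N c w : 0 <= cyl_ind N c w.
Proof. by apply: prodr_ge0 => m _; rewrite /ind ler0n. Qed.

Lemma sum_ind_eq (n : nat) (c : Lvl B n) :
  \sum_(f in LO B n) ind (f == c) = ind (c \in LO B n).
Proof.
rewrite big_mkcond (bigD1 c) //= eqxx big1 ?addr0.
  by rewrite /ind; case: (c \in LO B n).
by move=> f fc; rewrite (negbTE fc); case: (f \in LO B n).
Qed.

Lemma cyl_ind_depends N c : depends B (fun m => (m < N)%N) (cyl_ind N c).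
Proof. by move=> w w' ag; apply: eq_bigr => m _; rewrite ag. Qed.

Lemma integ_cyl_ind N c w : integ B (cyl_ind N c) 0 N w = cyl_meas B N c.
Proof.
elim: N w => [|N IH] w; first by rewrite /= /cyl_ind /cyl_meas !big_ord0.
have := integ_split B (cyl_ind N.+1 c) 0 N 1 w; rewrite addn1 addn0 => ->.
have e1 : forall w', integ B (cyl_ind N.+1 c) 0 N w' = cyl_meas B N c * ind (w' N == c N).
  move=> w'; rewrite -(IH w') mulrC.
  rewrite -(integ_pull B (fun m => m = N) (fun u => ind (u N == c N)) (cyl_ind N c));
    last (by move=> m ->; lia); last by move=> u u' ag; rewrite ag.
  by apply: integ_ext => u; rewrite /cyl_ind big_ord_recr /= mulrC.
rewrite (integ_ext B _ _ _ _ _ e1) integ_scale /= add0n.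
under eq_bigr do rewrite upd_same.
rewrite sum_ind_eq /cyl_meas big_ord_recr /=; congr (_ * _).
by rewrite /ind; case: (c N \in LO B N); rewrite ?mul1r ?mul0r.
Qed.

Lemma integ_lift F N M w : (N <= M)%N -> depends B (fun m => (m < N)%N) F ->
  integ B F 0 M w = integ B F 0 N w.
Proof.
move=> hNM dF; rewrite -(subnKC hNM) integ_split.
apply: (integ_indep B (fun _ => False)) => //.
by apply: depends_weaken (integ_depends B _ F 0 N dF) => m [hm h]; apply: h; lia.
Qed.

Lemma not_null_valid : ~ null B (fun w => valid_ord B w).
Proof.
move=> hn; have [L [hc hs]] := hn (1/2) (ltac:(by [])).
pose lev j := \max_(x <- L j) x.1.
have levP : forall j x, List.In x (L j) -> (x.1 <= lev j)%N.
  move=> j x; rewrite /lev; elim: (L j) => [|y s IH] //= [<-|h].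
    by rewrite big_cons leq_maxl.
  by rewrite big_cons (leq_trans (IH h)) // leq_maxr.
pose P j w := exists x, List.In x (L j) /\ in_cyl B x.1 x.2 w.
have [J hJ] : exists J, forall w, valid_ord B w -> exists j, (j < J)%N /\ P j w.
  apply: (compactness P lev).
    move=> j u u' ag [x [xin xc]]; exists x; split=> // m hm.
    by rewrite -ag ?xc //; apply: leq_trans hm (levP _ _ xin).
  by move=> u vu; have [j [x hx]] := hc u vu; exists j, x.
(* all cylinders of the finite subcover live below level M *)
pose M := \max_(j < J) lev j.
have levM : forall j x, (j < J)%N -> List.In x (L j) -> (x.1 <= M)%N.
  by move=> j x hj xin; apply: leq_trans (levP _ _ xin) (leq_bigmax (Ordinal hj)).
have key : 1 <= \sum_(0 <= j < J) \sum_(x <- L j) integ B (cyl_ind x.1 x.2) 0 M (ord0T B).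
  rewrite -(integ_cst B 1 0 M (ord0T B)).
  under eq_bigr do rewrite -integ_sum.
  rewrite -integ_sum; apply: integ_le => u vu _.
  pose u' m := if (m < M)%N then u m else make_valid u m.
  have [j [hj [x [xin xc]]]] : exists j, (j < J)%N /\ P j u'.
    by apply: hJ => m; rewrite /u'; case: ifP => hm; [apply: vu; lia | apply: make_valid_valid].
  have -> : 1 = cyl_ind x.1 x.2 u.
    apply/esym/cyl_ind_in => m hm; rewrite -xc // /u'.
    by rewrite (leq_trans hm (levM _ _ hj xin)).
  apply: le_trans (ler_sum_In _ (index_iota 0 J)
                     (fun j => \sum_(y <- L j) cyl_ind y.1 y.2 u) j _ _).
  - by apply: ler_sum_In xin => y; exact: cyl_ind_ge0.
  - by move=> y; apply: sumr_ge0 => *; apply: cyl_ind_ge0.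
  - by rewrite In_mem mem_index_iota.
suff : \sum_(0 <= j < J) \sum_(x <- L j) integ B (cyl_ind x.1 x.2) 0 M (ord0T B) <= 1/2.
  by move/(le_trans key); lra.
apply: le_trans (hs J); apply: ler_sum_nat => j hj; rewrite le_eqVlt; apply/orP; left; apply/eqP/eq_big_In => x xin.
rewrite (integ_lift _ x.1) ?integ_cyl_ind //; last exact: cyl_ind_depends.
by apply: levM xin; lia.
Qed.

End NotNull.

Lemma argmin_nat (c : nat -> nat) : exists t0, forall t, (c t0 <= c t)%N.
Proof.
suff : forall n, (exists t, (c t <= n)%N) -> exists t0, forall t, (c t0 <= c t)%N.
  by apply; exists 0%N.
elim=> [|n IH] [t ht].
  by exists t => t'; move: ht; rewrite leqn0 => /eqP ->.
case: (classic (exists t, (c t <= n)%N)) => h; first exact: IH.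
exists t => t'; apply: leq_trans ht _; rewrite leqNgt; apply/negP => h'.
by apply: h; exists t'.
Qed.

(* For a valid ordering every vertex v of
   level n+1 receives exactly one maximal edge; following these edges down
   defines the map [down1 n] from level n+1 to level n, and the maximal
   finite path from v down to level k ends at [down k t v].  The set
   [sources k t] of these end points (the paper's sources of the maximal
   paths from level k+t to level k) decreases with t; its eventual size
   is the number of maximal infinite paths. *)
Section MaximalPaths.
Local Close Scope ring_scope.
Variable B : bratteli.
Hypothesis HB : is_bratteli B.

(* Every level is nonempty: level 0 is, and every vertex emits an edge. *)
Lemma nV_pos n : 0 < nV B n.
Proof.
elim: n => [|n IH]; first by rewrite (proj1 HB).
have [e _] := (proj1 (proj2 HB)) n (Ordinal IH).
exact: leq_ltn_trans _ (ltn_ord (rng B n e)).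
Qed.

Variable w : OrdT B.

Lemma max_edge_unique n (e1 e2 : 'I_(ne B n)) : w n \in LO B n ->
  is_max_edge B w n e1 -> is_max_edge B w n e2 -> rng B n e1 = rng B n e2 -> e1 = e2.
Proof.
rewrite inE /valid_lvl => /andP[_ /forallP h] m1 m2 r12.
apply/eqP; apply: (implyP ((forallP (h e1)) e2)); rewrite r12 eqxx /=.
move: m1 m2; rewrite /is_max_edge r12 => /eqP m1 /eqP m2.
by apply/eqP/val_inj; rewrite /= m1 m2.
Qed.

(* A valid level ordering is a bijection of each fibre r^{-1}(v) onto
   {0, ..., cnt v - 1}, so the position cnt v - 1 is attained. *)
Lemma max_edge_exists n (v : 'I_(nV B n.+1)) : w n \in LO B n ->
  exists e, rng B n e = v /\ is_max_edge B w n e.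
Proof.
move=> vl; have vl' := vl; rewrite inE /valid_lvl in vl'.
case/andP: vl' => /forallP hlt /forallP hinj.
pose Fv := [set e : 'I_(ne B n) | rng B n e == v].
have hcn : cnt B n v <= ne B n := cnt_le B n v.
pose S := [set widen_ord hcn i | i : 'I_(cnt B n v)].
have cS : #|S| = cnt B n v.
  by rewrite card_imset ?card_ord // => a b /(congr1 val) /= h; apply: val_inj.
have inj : {in Fv &, injective (fun e => w n e)}.
  move=> a b; rewrite !inE => /eqP ra /eqP rb hab.
  by apply/eqP; apply: (implyP ((forallP (hinj a)) b)); rewrite ra rb hab !eqxx.
have sub : (fun e => w n e) @: Fv \subset S.
  apply/subsetP=> o /imsetP [e]; rewrite inE => /eqP re ->.
  have lt : w n e < cnt B n v by rewrite -re; exact: hlt.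
  by apply/imsetP; exists (Ordinal lt) => //; apply: val_inj.
have eqS : (fun e => w n e) @: Fv = S.
  by apply/eqP; rewrite eqEcard sub cS card_in_imset //= /cnt.
have cpos : 0 < cnt B n v.
  have [e re] := (proj2 (proj2 HB)) n v.
  by rewrite /cnt; apply/card_gt0P; exists e; rewrite inE re.
have hp : (cnt B n v).-1 < cnt B n v by rewrite ltn_predL.
have : widen_ord hcn (Ordinal hp) \in S by apply/imsetP; exists (Ordinal hp).
rewrite -eqS => /imsetP [e]; rewrite inE => /eqP re he.
by exists e; split=> //; rewrite /is_max_edge re -he /=.
Qed.

Definition down1 n (v : nat) : nat :=
  if [pick e | (val (rng B n e) == v) && is_max_edge B w n e] is Some e
  then val (src B n e) else 0.

Fixpoint down (k t : nat) (v : nat) : nat :=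
  if t is t'.+1 then down k t' (down1 (t' + k) v) else v.

Lemma down1_max n (e : 'I_(ne B n)) : w n \in LO B n -> is_max_edge B w n e ->
  down1 n (val (rng B n e)) = val (src B n e).
Proof.
move=> vl me; rewrite /down1; case: pickP => [e' /andP[/eqP r me']|/(_ e)].
  by rewrite (max_edge_unique n e' e) //; apply: val_inj.
by rewrite eqxx me.
Qed.

Lemma down1_edge n (v : 'I_(nV B n.+1)) : w n \in LO B n ->
  exists e, rng B n e = v /\ is_max_edge B w n e /\ val (src B n e) = down1 n (val v).
Proof.
move=> vl; have [e [re me]] := max_edge_exists n v vl.
by exists e; split=> //; split=> //; rewrite -re down1_max.
Qed.

Lemma down1_range n v : w n \in LO B n -> v < nV B n.+1 -> down1 n v < nV B n.
Proof.
by move=> vl hv; have [e [_ [_ <-]]] := down1_edge n (Ordinal hv) vl; exact: ltn_ord.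
Qed.

Definition valid_block k t := forall m, k <= m < t + k -> w m \in LO B m.

Lemma valid_block_le k t t' : t <= t' -> valid_block k t' -> valid_block k t.
Proof. by move=> htt vb m hm; apply: vb; lia. Qed.

Lemma down_range k t v : valid_block k t -> v < nV B (t + k) -> down k t v < nV B k.
Proof.
elim: t v => [|t IH] v vb hv //=; apply: IH.
  by apply: valid_block_le vb.
by apply: down1_range => //; apply: vb; lia.
Qed.

Lemma down_comp k t s v : down k (t + s) v = down k t (down (t + k) s v).
Proof.
elim: s v => [|s IH] v; first by rewrite addn0.
by rewrite addnS /= IH (_ : s + (t + k) = t + s + k) //; lia.
Qed.

Lemma maxreach_down t k (u : 'I_(nV B k)) (v : 'I_(nV B (t + k))) : valid_block k t ->
  maxreach B w t k u v = (val u == down k t (val v)).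
Proof.
elim: t v => [|t IH] v vb //=.
have vt : w (t + k) \in LO B (t + k) by apply: vb; lia.
have vb' : valid_block k t by apply: valid_block_le vb.
apply/existsP/eqP.
  case=> e /and3P[/eqP re me mr]; rewrite IH // in mr; rewrite (eqP mr).
  by rewrite -re down1_max.
move=> hu; have [e [re [me se]]] := down1_edge (t + k) v vt.
by exists e; rewrite re eqxx me /= IH // se; exact/eqP.
Qed.

Definition reaches k t u := exists v, v < nV B (t + k) /\ u = down k t v.

Definition sources k t : {set 'I_(nV B k)} :=
  [set u | [exists v : 'I_(nV B (t + k)), val u == down k t (val v)]].

Lemma sourcesP k t (u : 'I_(nV B k)) : reflect (reaches k t (val u)) (u \in sources k t).
Proof.
rewrite inE; apply: (iffP existsP).
  by case=> v /eqP ->; exists (val v); split=> //; exact: ltn_ord.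
by case=> v [hv ->]; exists (Ordinal hv).
Qed.

Lemma max_sources_sources k t : valid_block k t -> max_sources B w k t = sources k t.
Proof.
by move=> vb; apply/setP => u; rewrite !inE; apply: eq_existsb => v; exact: maxreach_down.
Qed.

Lemma reaches_mono k t s u : valid_block k (t + s) -> reaches k (t + s) u -> reaches k t u.
Proof.
move=> vb [v [hv ->]]; rewrite down_comp.
exists (down (t + k) s v); split=> //; apply: down_range.
  by move=> m hm; apply: vb; lia.
by rewrite (_ : s + (t + k) = t + s + k) //; lia.
Qed.

Lemma sources_mono k t s : valid_block k (t + s) -> sources k (t + s) \subset sources k t.
Proof.
move=> vb; apply/subsetP => u /sourcesP h; apply/sourcesP; exact: reaches_mono vb h.
Qed.

Lemma card_sources_mono k t t' : valid_block k t' -> t <= t' ->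
  #|max_sources B w k t'| <= #|max_sources B w k t|.
Proof.
move=> vb htt; rewrite !max_sources_sources //; last exact: valid_block_le vb.
by apply: subset_leq_card; rewrite -(subnKC htt); apply: sources_mono; rewrite subnKC.
Qed.

End MaximalPaths.

Lemma mem_map_In (T : Type) (U : eqType) (f : T -> U) v l :
  v \in map f l -> exists x, In x l /\ v = f x.
Proof.
elim: l => [|a l IH] //=; rewrite inE => /orP[/eqP ->|h]; first by exists a; auto.
by have [x [h1 h2]] := IH h; exists x; auto.
Qed.

Lemma In_map_mem (T : Type) (U : eqType) (f : T -> U) x l : In x l -> f x \in map f l.
Proof. by elim: l => [|a l IH] //= [->|h]; rewrite inE ?eqxx // IH ?orbT. Qed.

(* Maximal paths
   are determined by any of their edges (they are built downwards from
   maximal edges), so r distinct maximal paths eventually pass through r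
   distinct vertices, which all belong to every [sources k t]; conversely,
   by Koenig's lemma, every vertex lying in all the [sources k t] is on a
   maximal path.  Hence for valid w:
     at least r maximal paths  ->  eventually r <= #|sources k t| for all t,
     at most r maximal paths   ->  for all k, #|sources k t| <= r for some t. *)
Section CountMaximalPaths.
Local Close Scope ring_scope.
Variable B : bratteli.
Hypothesis HB : is_bratteli B.
Variable w : OrdT B.
Hypothesis vw : valid_ord B w.

Lemma valid_block_all k t : valid_block B w k t.
Proof. by move=> m _; apply: vw. Qed.

Lemma max_path_src x n : is_max_path B w x ->
  val (src B n (x n)) = down1 B w n (val (src B n.+1 (x n.+1))).
Proof. by case=> hp hm; rewrite -hp down1_max. Qed.

Lemma max_path_down x k t : is_max_path B w x ->
  val (src B k (x k)) = down B w k t (val (src B (t + k) (x (t + k)))).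
Proof. by move=> mx; elim: t => [|t IH] //=; rewrite IH (max_path_src x (t + k)). Qed.

Lemma max_path_reaches x k t : is_max_path B w x -> reaches B w k t (val (src B k (x k))).
Proof.
move=> mx; exists (val (src B (t + k) (x (t + k)))); split; first exact: ltn_ord.
exact: max_path_down.
Qed.

Lemma max_path_step x y m : is_max_path B w x -> is_max_path B w y ->
  src B m.+1 (x m.+1) = src B m.+1 (y m.+1) -> x m = y m.
Proof. by move=> [hx mx] [hy my] e; apply: (max_edge_unique B w m) => //; rewrite hx hy e. Qed.

Lemma max_path_agree_below x y n : is_max_path B w x -> is_max_path B w y ->
  x n = y n -> forall m, m <= n -> x m = y m.
Proof.
move=> mx my e m hm; rewrite -(subnK hm) in e.
elim: (n - m) e => [|d IH] e; first by [].
by apply: IH; apply: max_path_step => //; rewrite -addSn e.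
Qed.

Definition persistent k u := forall t, reaches B w k t u.

Lemma persistent_range k u : persistent k u -> u < nV B k.
Proof. by move=> h; have [v [hv ->]] := h 0. Qed.

(* A persistent vertex is the image of a persistent vertex of the next
   level: otherwise, by finiteness of the level, it would stop being a
   source from some level on. *)
Lemma persistent_step n x : persistent n x ->
  exists y, persistent n.+1 y /\ down1 B w n y = x.
Proof.
move=> hx; apply: NNPP => hno.
have h1 : forall y : 'I_(nV B n.+1), exists T, down1 B w n y = x -> ~ reaches B w n.+1 T y.
  move=> y; case: (eqVneq (down1 B w n y) x) => [e|ne]; last by exists 0 => /eqP; rewrite (negbTE ne).
  apply: NNPP => hh; apply: hno; exists y; split=> // T; apply: NNPP => hT; apply: hh.
  by exists T.
have [Ty hTy] := choice _ h1.
pose T := \max_(y < nV B n.+1) Ty y.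
have [v [hv hxv]] := hx T.+1.
have ex : x = down1 B w n (down B w n.+1 T v).
  by rewrite hxv -(add1n T) down_comp /= add1n.
have yr : down B w n.+1 T v < nV B n.+1.
  by apply: (down_range B HB) => //; rewrite addnS -addSn.
apply: (hTy (Ordinal yr) (esym ex)).
have hle : Ty (Ordinal yr) <= T by apply: (leq_bigmax (Ordinal yr)).
apply: (reaches_mono B HB w n.+1 (Ty (Ordinal yr)) (T - Ty (Ordinal yr))).
  exact: valid_block_all.
by rewrite subnKC //; exists v; split=> //; rewrite addnS -addSn.
Qed.

Lemma persistent_max_path k u : persistent k u ->
  exists x, is_max_path B w x /\ val (src B k (x k)) = u.
Proof.
move=> hu.
have hex : forall p : nat * nat, exists y,
    persistent p.1 p.2 -> persistent p.1.+1 y /\ down1 B w p.1 y = p.2.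
  move=> [n z] /=; case: (classic (persistent n z)) => h; last by exists 0.
  by have [y hy] := persistent_step n z h; exists y.
have [st hst] := choice _ hex.
(* the vertices of the path: below level k they are forced, above they are
   chosen persistent *)
pose fix up j := if j is j'.+1 then st (j' + k, up j') else u.
have upP : forall j, persistent (j + k) (up j).
  by elim=> [|j IH] //=; exact: (hst (j + k, up j) IH).1.
pose U n := if n <= k then down B w n (k - n) u else up (n - k).
have Ur : forall n, U n < nV B n.
  move=> n; rewrite /U; case: ifP => hn.
    apply: (down_range B HB); first exact: valid_block_all.
    by rewrite subnK //; exact: persistent_range hu.
  by have := persistent_range _ _ (upP (n - k)); rewrite subnK //; lia.
have Uc : forall n, down1 B w n (U n.+1) = U n.
  move=> n; rewrite /U; case: (ltngtP n k) => hnk.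
  - have -> : k - n = 1 + (k - n.+1) by lia.
    by rewrite down_comp /= add1n.
  - have -> : n.+1 - k = (n - k).+1 by lia.
    have := (hst (n - k + k, up (n - k)) (upP (n - k))).2.
    by rewrite /= subnK // ltnW.
  - rewrite hnk subSnn subnn /=.
    by have := (hst (0 + k, u) hu).2; rewrite /= add0n.
have hedge : forall n, exists e : 'I_(ne B n),
    rng B n e = Ordinal (Ur n.+1) /\ is_max_edge B w n e.
  by move=> n; apply: (max_edge_exists B HB) => //; exact: vw.
have [x hx] := non_dep_dep_functional_choice choice _ _ hedge.
have srcx : forall n, val (src B n (x n)) = U n.
  move=> n; have [re me] := hx n.
  by rewrite -(down1_max B w n (x n)) ?re //=; exact: vw.
exists x; split; last by rewrite srcx /U leqnn subnn.
split; last by move=> n; exact: (hx n).2.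
by move=> n; apply: val_inj; rewrite srcx; have [-> _] := hx n.
Qed.

(* Every valid ordering has a maximal path (through the persistent root). *)
Lemma max_path_exists : exists x, is_max_path B w x.
Proof.
have h : persistent 0 0.
  move=> t; have ht : 0 < nV B (t + 0) by rewrite addn0; apply: (nV_pos B HB).
  exists 0; split=> //.
  have := down_range B HB w 0 t 0 (valid_block_all 0 t) ht.
  by rewrite (proj1 HB); case: (down B w 0 t 0).
by have [x [hx _]] := persistent_max_path 0 0 h; exists x.
Qed.

Lemma path_ext (x y : pathT B) : (forall n, x n = y n) -> x = y.
Proof. exact: functional_extensionality_dep. Qed.

Lemma max_paths_separate x y : is_max_path B w x -> is_max_path B w y -> x <> y ->
  exists L, forall k, L <= k -> src B k (x k) <> src B k (y k).
Proof.
move=> mx my nxy.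
have [n hn] : exists n, x n <> y n.
  apply: NNPP => h; apply: nxy; apply: path_ext => n; apply: NNPP => h2; apply: h.
  by exists n.
exists n.+1 => k hk e.
have e' : x k.-1 = y k.-1 by apply: max_path_step => //; rewrite prednK //; lia.
by apply: hn; apply: (max_path_agree_below x y k.-1) => //; lia.
Qed.

Lemma max_paths_separate_list x l : is_max_path B w x -> Forall (is_max_path B w) l ->
  ~ In x l -> exists L, forall k, L <= k -> forall y, In y l -> src B k (x k) <> src B k (y k).
Proof.
move=> mx; elim: l => [|y l IH] hl hn; first by exists 0.
inversion hl; subst.
have [L1 h1] := max_paths_separate x y mx H1 (fun e => hn (or_introl (esym e))).
have [L2 h2] := IH H2 (fun h => hn (or_intror h)).
exists (maxn L1 L2) => k hk z [<-|hz].
  by apply: h1; apply: leq_trans hk; apply: leq_maxl.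
by apply: h2 => //; apply: leq_trans hk; apply: leq_maxr.
Qed.

Lemma max_paths_uniq_srcs l : NoDup l -> Forall (is_max_path B w) l ->
  exists L, forall k, L <= k -> uniq (map (fun p : pathT B => src B k (p k)) l).
Proof.
elim: l => [|x l IH] hnd hl; first by exists 0.
inversion hnd; inversion hl; subst.
have [L1 h1] := max_paths_separate_list x l H5 H6 H1.
have [L2 h2] := IH H2 H6.
exists (maxn L1 L2) => k hk /=; apply/andP; split; last first.
  by apply: h2; apply: leq_trans hk; apply: leq_maxr.
apply/negP => /mem_map_In [y [yin e]].
by apply: (h1 k) e; first by apply: leq_trans hk; apply: leq_maxl.
Qed.

Lemma card_sources_ge l : NoDup l -> Forall (is_max_path B w) l ->
  exists L, forall k t, L <= k -> length l <= #|sources B w k t|.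
Proof.
move=> hnd hl; have [L hL] := max_paths_uniq_srcs l hnd hl.
exists L => k t hk.
rewrite -[length l]/(size l) cardE -(size_map (fun p : pathT B => src B k (p k))).
apply: uniq_leq_size; first exact: hL.
move=> u /mem_map_In [p [pin ->]]; rewrite mem_enum.
apply/sourcesP; apply: max_path_reaches.
by move: hl; rewrite Forall_forall; apply.
Qed.

Lemma card_sources_le l :
  (forall x, is_max_path B w x -> exists y, In y l /\ forall n, x n = y n) ->
  forall k, exists t, #|sources B w k t| <= length l.
Proof.
move=> hc k.
(* the sources decrease, so at a minimum of their size they are persistent *)
have [t0 minP] := argmin_nat (fun t => #|sources B w k t|).
exists t0.
have sub : forall t, sources B w k t0 \subset sources B w k t.
  move=> t; case: (leqP t t0) => htt.
    by rewrite -(subnKC htt); apply: (sources_mono B HB w); exact: valid_block_all.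
  have s1 : sources B w k t \subset sources B w k t0.
    by rewrite -(subnKC (ltnW htt)); apply: (sources_mono B HB w); exact: valid_block_all.
  by have /eqP -> : sources B w k t == sources B w k t0 by rewrite eqEcard s1 minP.
have hU : forall u, u \in sources B w k t0 -> u \in map (fun p : pathT B => src B k (p k)) l.
  move=> u hu.
  have hall : persistent k (val u) by move=> t; apply/sourcesP; exact: (subsetP (sub t)).
  have [x [mx xu]] := persistent_max_path k (val u) hall.
  have [y [yin ey]] := hc x mx.
  have -> : u = src B k (y k) by apply: val_inj; rewrite -ey xu.
  exact: In_map_mem.
rewrite -[length l]/(size l) -(size_map (fun p : pathT B => src B k (p k))).
by apply: leq_trans (card_size _); apply: subset_leq_card; apply/subsetP => u /hU.
Qed.

End CountMaximalPaths.

Lemma NoDup_sublist (T : Type) (l : list T) n : NoDup l -> (n <= length l)%N ->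
  exists l', NoDup l' /\ length l' = n /\ incl l' l.
Proof.
elim: l n => [|a l IH] n hnd h.
  by move: h; rewrite leqn0 => /eqP ->; exists [::]; split; [exact: NoDup_nil | split=> // ? []].
inversion hnd; subst.
case: n h => [|n] h; first by exists [::]; split; [exact: NoDup_nil | split=> // ? []].
have [l' [h1 [h2 h3]]] := IH n H2 h.
exists (a :: l'); split; first by constructor=> // /h3.
by split; [rewrite /= h2 | apply: incl_cons; [left | apply: incl_tl]].
Qed.

Lemma bounded_max (P : nat -> Prop) j : (exists r, P r) -> (forall r, P r -> (r <= j)%N) ->
  exists r, P r /\ forall r', P r' -> (r' <= r)%N.
Proof.
elim: j => [|j IH] [r hr] hb.
  by exists r; split=> // r' /hb; have := hb r hr; lia.
case: (classic (P j.+1)) => h; first by exists j.+1; split.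
apply: IH; first by exists r.
by move=> r' hr'; have := hb r' hr'; rewrite leq_eqVlt => /orP[/eqP e|//]; subst r'.
Qed.

Section Classify.
Local Close Scope ring_scope.
Variable B : bratteli.
Hypothesis HB : is_bratteli B.
Variable w : OrdT B.

Definition many_max_paths r :=
  exists l, NoDup l /\ length l = r /\ Forall (is_max_path B w) l.

Lemma many_max_paths_le r r' : r' <= r -> many_max_paths r -> many_max_paths r'.
Proof.
move=> h [l [hnd [hlen hF]]]; rewrite -hlen in h; have [l' [h1 [h2 h3]]] := NoDup_sublist _ l r' hnd h.
by exists l'; split=> //; split=> //; apply: incl_Forall h3 hF.
Qed.

Lemma OBj_many_max_paths j i : OBj B j w -> i <= j -> many_max_paths i.
Proof.
move=> [l [hlen [hF [hnd _]]]] hij; apply: (many_max_paths_le j) => //.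
by exists l.
Qed.

Hypothesis vw : valid_ord B w.

Lemma classify_OBj j : ~ OBj B j w ->
  many_max_paths j.+1 \/ exists i, 1 <= i < j /\ OBj B i w.
Proof.
move=> hno; case: (classic (many_max_paths j.+1)) => hm; [by left | right].
have [r [[l [hnd [hlen hF]]] hmax]] :
    exists r, many_max_paths r /\ forall r', many_max_paths r' -> r' <= r.
  apply: (bounded_max _ j); first by exists 0, [::]; split; [exact: NoDup_nil | split].
  move=> r hr; rewrite leqNgt; apply/negP => hlt; apply: hm.
  exact: many_max_paths_le hlt hr.
have hobj : OBj B r w.
  exists l; split=> //; split=> //; split=> //; split; last first.
    by move=> y z _ _ h; apply: path_ext.
  move=> x mx; case: (classic (In x l)) => hx; first by exists x.
  suff /hmax : many_max_paths r.+1 by lia.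
  by exists (x :: l); split; [constructor | split; [rewrite /= hlen | constructor]].
have r1 : 1 <= r.
  have [x mx] := max_path_exists B HB w vw.
  apply: (hmax 1); exists [:: x]; split; first by constructor; [|exact: NoDup_nil].
  by split; [|constructor].
have rj : r <= j.
  by rewrite leqNgt; apply/negP => hlt; apply: hm; apply: many_max_paths_le hlt _; exists l.
exists r; split=> //; rewrite r1 ltn_neqAle rj andbT.
by apply/eqP => e; subst; exact: hno.
Qed.

End Classify.

Lemma prod_one_minus_le (p : nat -> rat) K L :
  (forall k, 0 <= p k <= 1) ->
  \prod_(K <= k < L) (1 - p k) <= 1 / (1 + \sum_(K <= k < L) p k).
Proof.
move=> hp; elim: L => [|L IH]; first by rewrite !big_geq // addr0 divr1.
case: (leqP K L) => hKL; last by rewrite !big_geq // addr0 divr1.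
rewrite !big_nat_recr //=.
set P := \prod_(K <= k < L) (1 - p k) in IH *.
set S := \sum_(K <= k < L) p k in IH *.
have S0 : 0 <= S by apply: sumr_ge0 => k _; case/andP: (hp k).
have [p0 p1] : 0 <= p L /\ p L <= 1 by apply/andP.
apply: le_trans (_ : (1 / (1 + S)) * (1 - p L) <= _); first by apply: ler_wpM2r; lra.
have e : 1 / (1 + (S + p L)) - 1 / (1 + S) * (1 - p L) =
    (p L * S + p L * p L) / ((1 + S) * (1 + (S + p L))).
  by field; apply/andP; split; apply/eqP; lra.
have : 0 <= (p L * S + p L * p L) / ((1 + S) * (1 + (S + p L))).
  by apply: divr_ge0; [nra | apply: mulr_ge0; lra].
by rewrite -e; lra.
Qed.

Lemma diverges_tail (a : nat -> rat) : series_diverges a -> (forall k, 0 <= a k) ->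
  forall K M, 0 <= M -> exists K', (K <= K')%N /\ M < \sum_(K <= k < K') a k.
Proof.
move=> hdiv a0 K M M0; have [K' hK'] := hdiv (\sum_(k < K) a k + M).
rewrite -!(big_mkord xpredT) in hK'.
have KK : (K <= K')%N.
  rewrite leqNgt; apply/negP => h; move: hK'.
  rewrite (@big_cat_nat _ _ _ K' 0 K _ _ (leq0n K') (ltnW h)) /=.
  have : 0 <= \sum_(K' <= k < K) a k by apply: sumr_ge0.
  lra.
exists K'; split=> //; move: hK'.
by rewrite (@big_cat_nat _ _ _ K 0 K' _ _ (leq0n K) KK) /=; lra.
Qed.

Lemma strictly_increasing_le (m : nat -> nat) a b :
  strictly_increasing m -> (a <= b)%N -> (m a <= m b)%N.
Proof.
move=> mi h; rewrite -(subnKC h); elim: (b - a)%N => [|n IH]; first by rewrite addn0.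
by rewrite addnS (leq_trans IH) // ltnW // mi.
Qed.

Lemma strictly_increasing_ge (m : nat -> nat) k : strictly_increasing m -> (k <= m k)%N.
Proof. by move=> mi; elim: k => [|k IH] //; apply: leq_ltn_trans IH (mi k). Qed.

Lemma max_sources_eq B (w w' : OrdT B) k t :
  (forall m, (k <= m < t + k)%N -> w m = w' m) -> max_sources B w k t = max_sources B w' k t.
Proof.
move=> h; apply/setP => u; rewrite !inE; apply: eq_existsb => v.
elim: t v h => [|t IH] v h //=; apply: eq_existsb => e.
rewrite /is_max_edge h; last by lia.
by rewrite IH // => m hm; apply: h; lia.
Qed.

(* The second Borel-Cantelli lemma for the independent events G_(m k)^(m (k+1), i):
   if their probabilities have a divergent sum, almost every ordering lies in
   infinitely many of them, hence has at most i maximal paths. *)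
Section BorelCantelli.
Variable B : bratteli.
Variable m : nat -> nat.
Variable i : nat.
Hypothesis mi : strictly_increasing m.

Definition block_event k (w : OrdT B) : rat :=
  ind (#|max_sources B w (m k) (m k.+1 - m k)| == i).

Lemma block_event_depends k :
  depends B (fun x => (m k <= x < (m k.+1 - m k) + m k)%N) (block_event k).
Proof. by move=> w w' h; rewrite /block_event (max_sources_eq B w w' _ _ h). Qed.

Lemma integ_block_event k w :
  integ B (block_event k) (m k) (m k.+1 - m k) w = muG B (m k) (m k.+1) i.
Proof. by apply: integ_block => //; exact: block_event_depends. Qed.

Lemma muG_01 k : 0 <= muG B (m k) (m k.+1) i <= 1.
Proof. by apply: integ_01 => u; exact: ind01. Qed.

(* Independence: the blocks [m k, m (k+1)) are disjoint. *)
Lemma integ_prod_block_events K n w :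
  integ B (fun w => \prod_(K <= k < K + n) (1 - block_event k w)) 0 (m (K + n)) w =
  \prod_(K <= k < K + n) (1 - muG B (m k) (m k.+1) i).
Proof.
elim: n w => [|n IH] w.
  rewrite addn0 big_geq // (integ_ext B _ (fun _ => 1)) ?integ_one // => u.
  by rewrite big_geq.
set L := (K + n)%N in IH *; rewrite addnS -/L.
have hL : (m L <= m L.+1)%N by apply: ltnW; apply: mi.
rewrite -(subnKC hL) integ_split.
rewrite (integ_ext B _ (fun w' => \prod_(K <= k < L) (1 - muG B (m k) (m k.+1) i) * 1 +
    (- \prod_(K <= k < L) (1 - muG B (m k) (m k.+1) i)) * block_event L w')); last first.
  move=> u.
  rewrite (integ_ext B _ (fun w' => (1 - block_event L w') *
                                    \prod_(K <= k < L) (1 - block_event k w'))); last first.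
    by move=> v; rewrite big_nat_recr ?leq_addr //= mulrC.
  rewrite (integ_pull B (fun x => (m L <= x < (m L.+1 - m L) + m L)%N)).
  - by rewrite IH; ring.
  - by move=> v v' h; rewrite (block_event_depends L v v' h).
  - by move=> x hx; lia.
rewrite integ_add integ_scale integ_one integ_scale addn0 integ_block_event.
by rewrite big_nat_recr ?leq_addr //=; ring.
Qed.

Lemma ind_all_block_events (w : OrdT B) (s : seq nat) :
  ind (all (fun k => block_event k w == 0) s) = \prod_(k <- s) (1 - block_event k w).
Proof.
elim: s => [|a s IH]; first by rewrite big_nil.
rewrite big_cons /= -IH /block_event /ind.
by case: (#|_| == i); case: (all _ _); rewrite /= ?subrr ?subr0 ?mul1r ?mul0r ?oner_eq0.
Qed.

Lemma avoid_block_events_null K :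
  series_diverges (fun k => muG B (m k) (m k.+1) i) ->
  null B (fun w => valid_ord B w /\ forall k, (K <= k)%N -> block_event k w = 0).
Proof.
move=> hdiv eps ep; pose p k := muG B (m k) (m k.+1) i.
have p0 : forall k, 0 <= p k by move=> k; case/andP: (muG_01 k).
have eps_inv0 : 0 <= eps^-1 by rewrite invr_ge0 ltW.
have [K' [KK Ssum]] := diverges_tail p hdiv p0 K eps^-1 eps_inv0.
pose Eb (w : OrdT B) := all (fun k => block_event k w == 0) (index_iota K K').
have hdE : forall w w', (forall x, (x < m K')%N -> w x = w' x) -> Eb w = Eb w'.
  move=> w w' ag; apply: eq_in_all => k; rewrite mem_index_iota => /andP[_ hk].
  rewrite (block_event_depends k w w') // => x hx; apply: ag.
  by apply: leq_trans (strictly_increasing_le m k.+1 K' mi hk); lia.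
apply: covered_sub (covered_le _ _ _ _ _ (covered_finite B Eb (m K') hdE)).
  move=> w [vw hE]; split; first by move=> x _; apply: vw.
  by apply/allP => k; rewrite mem_index_iota => /andP[hk _]; apply/eqP; exact: hE k hk.
rewrite (integ_ext B _ (fun w => \prod_(K <= k < K + (K' - K)) (1 - block_event k w)));
  last by move=> u; rewrite subnKC // ind_all_block_events.
have := integ_prod_block_events K (K' - K) (ord0T B); rewrite subnKC // => ->.
apply: le_trans (prod_one_minus_le p K K' muG_01) _.
set S := \sum_(K <= k < K') p k in Ssum *.
have S0 : 0 <= S by apply: sumr_ge0.
rewrite ler_pdivrMr; last lra.
have : eps * eps^-1 < eps * S by rewrite ltr_pM2l.
by rewrite divff ?gt_eqF //; nra.
Qed.

Hypothesis HB : is_bratteli B.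

Lemma many_max_paths_avoid w : valid_ord B w -> many_max_paths B w i.+1 ->
  exists K, forall k, (K <= k)%N -> block_event k w = 0.
Proof.
move=> vw [l [hnd [hlen hF]]]; have [L hL] := card_sources_ge B w vw l hnd hF.
exists L => k hk; rewrite /block_event (max_sources_sources B HB w); last exact: valid_block_all.
have := hL (m k) (m k.+1 - m k)%N (leq_trans hk (strictly_increasing_ge m k mi)).
by rewrite hlen /ind; case: eqP => // ->; rewrite ltnn.
Qed.

Lemma many_max_paths_null :
  series_diverges (fun k => muG B (m k) (m k.+1) i) ->
  null B (fun w => valid_ord B w /\ many_max_paths B w i.+1).
Proof.
move=> hdiv; apply: (null_sub B _ (fun w => exists K, valid_ord B w /\
                      forall k, (K <= k)%N -> block_event k w = 0)).
  by move=> w [vw hm]; have [K hK] := many_max_paths_avoid w vw hm; exists K.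
by apply: null_union => K; apply: avoid_block_events_null.
Qed.

End BorelCantelli.

Lemma archi_nat (x : rat) : exists n : nat, x < n%:R.
Proof.
case: (lerP 0 x) => hx; first by exists (Num.Def.archi_bound x); apply: archi_boundP.
by exists 0%N; rewrite (lt_le_trans hx).
Qed.

Lemma nonincreasing_stable (h : nat -> rat) N : (forall M, (N <= M)%N -> 0 <= h M) ->
  (forall M M', (N <= M <= M')%N -> h M' <= h M) ->
  forall eta, 0 < eta -> exists M0, (N <= M0)%N /\ forall M, (M0 <= M)%N -> h M0 <= h M + eta.
Proof.
move=> h0 hdec eta he; apply: NNPP => hno.
have st : forall M0, exists M, (N <= M0)%N -> (M0 <= M)%N /\ h M + eta < h M0.
  move=> M0; case: (boolP (N <= M0)%N) => hM0; last by exists 0%N.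
  apply: NNPP => hh; apply: hno; exists M0; split=> // M hM.
  by rewrite leNgt; apply/negP => hlt; apply: hh; exists M => _; split.
have [nx hnx] := choice _ st.
(* otherwise h drops by eta infinitely often *)
pose fix q j := if j is j'.+1 then nx (q j') else N.
have qN : forall j, (N <= q j)%N.
  by elim=> [|j IH] //=; exact: leq_trans IH (hnx _ IH).1.
have qv : forall j, h (q j) + j%:R * eta <= h N.
  elim=> [|j IH]; first by rewrite /= mul0r addr0.
  have [_ hlt] := hnx _ (qN j); rewrite /= -/(q j) in hlt *.
  by rewrite -natr1 mulrDl mul1r; lra.
have [n hn] := archi_nat (h N / eta).
have := qv n; have := h0 _ (qN n).
by rewrite ltr_pdivrMr // in hn; lra.
Qed.

(* First, for every delta > 0 there are arbitrarily large k with
   mu(G_k^(k+M, i)) <= delta for all M >= 1 (otherwise a sequence of blocks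
   each of measure > delta would give a divergent series).  For such k, an
   ordering with exactly i maximal paths (and k large) satisfies
   #|sources k t| >= i for all t, with equality from some first time t on.
   The events "equality first at time t, and still at time M" are disjoint in
   t, of total measure <= mu(G_k^(k+M, i)) <= delta, and nonincreasing in M;
   choosing M = M_t where the t-th event is within delta / 2^(t+1) of its
   limit yields a cover of weight 2 delta. *)
Section ExactCount.
Variable B : bratteli.
Hypothesis HB : is_bratteli B.
Variable i : nat.

Definition nsrc (k : nat) (w : OrdT B) t := #|max_sources B w k t|.

Lemma nsrc_depends k (w w' : OrdT B) M t : (forall x, (k <= x < M + k)%N -> w x = w' x) ->
  (t <= M)%N -> nsrc k w t = nsrc k w' t.
Proof.
by move=> ag htM; rewrite /nsrc (max_sources_eq B w w') // => x hx; apply: ag; lia.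
Qed.

Definition first_hit k t (w : OrdT B) : bool :=
  (nsrc k w t == i) && [forall t' : 'I_t, nsrc k w t' != i].

Lemma sum_first_hit k w J :
  \sum_(0 <= t < J) ind (first_hit k t w) = ind [exists t : 'I_J, nsrc k w t == i].
Proof.
elim: J => [|J IH].
  by rewrite big_geq //; apply/esym; rewrite /ind; case: existsP => // -[[t ht] _].
rewrite big_nat_recr //= IH /first_hit.
case: existsP => [[t ht]|hn].
  have -> : [exists t0 : 'I_J.+1, nsrc k w t0 == i].
    by apply/existsP; exists (widen_ord (leqnSn J) t).
  have -> : [forall t' : 'I_J, nsrc k w t' != i] = false.
    by apply/negbTE/forallPn; exists t; rewrite negbK.
  by rewrite andbF /ind /= addr0.
have -> : [forall t' : 'I_J, nsrc k w t' != i].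
  by apply/forallP => t; apply/negP => h; apply: hn; exists t.
rewrite andbT /ind /= add0r; congr (nat_of_bool _)%:R.
apply/idP/existsP => [h|[[t ht] /eqP e]]; first by exists ord_max.
have et : t = J.
  apply/eqP; rewrite eqn_leq -ltnS ht /= leqNgt; apply/negP => h.
  by apply: hn; exists (Ordinal h); rewrite /= e.
by apply/eqP; rewrite -e /= et.
Qed.

Definition still_hit k t M (w : OrdT B) := first_hit k t w && (nsrc k w M == i).

Lemma still_hit_eq k t M (w w' : OrdT B) : (t <= M)%N ->
  (forall x, (k <= x < M + k)%N -> w x = w' x) -> still_hit k t M w = still_hit k t M w'.
Proof.
move=> htM ag; rewrite /still_hit /first_hit.
rewrite (nsrc_depends k w w' M M) // (nsrc_depends k w w' M t) //.
congr (_ && _ && _); apply: eq_forallb => t'.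
by rewrite (nsrc_depends k w w' M t') //; apply: leq_trans (ltnW (ltn_ord t')) htM.
Qed.

Lemma still_hit_depends k t M : (t <= M)%N ->
  depends B (fun x => (k <= x < M + k)%N) (fun w => ind (still_hit k t M w)).
Proof. by move=> htM w w' ag; rewrite (still_hit_eq k t M w w'). Qed.

Definition still_hit_meas k t M := integ B (fun w => ind (still_hit k t M w)) k M (ord0T B).

Lemma still_hit_meas_ge0 k t M : 0 <= still_hit_meas k t M.
Proof. by apply: integ_ge0 => u; case/andP: (ind01 (still_hit k t M u)). Qed.

(* Disjointness in t. *)
Lemma sum_still_hit_meas k J M :
  \sum_(0 <= t < J) still_hit_meas k t M <= muG B k (k + M) i.
Proof.
rewrite /muG /muG_d addKn /still_hit_meas -integ_sum; apply: integ_le => u _ _.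
rewrite /still_hit; case: (nsrc k u M == i); last by rewrite big1 // => t _; rewrite andbF.
under eq_bigr do rewrite andbT.
by rewrite sum_first_hit; case/andP: (ind01 [exists t : 'I_J, nsrc k u t == i]).
Qed.

(* Since the sources decrease, "still hit at M'" implies "still hit at M". *)
Lemma still_hit_meas_mono k t M M' : (t <= M <= M')%N ->
  still_hit_meas k t M' <= still_hit_meas k t M.
Proof.
case/andP=> h1 h2; rewrite /still_hit_meas.
rewrite -(integ_block B (fun w => ind (still_hit k t M w)) k M M' (ord0T B) (ord0T B)) //;
  last exact: still_hit_depends.
apply: integ_le => u vu _; rewrite /still_hit /ind.
case: (first_hit k t u) /andP => [[/eqP e1 _]|] //=; case: eqP => //= e2.
have := card_sources_mono B HB u k M M' vu h2.
have := card_sources_mono B HB u k t M (valid_block_le B u k M M' h2 vu) h1.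
rewrite -/(nsrc k u M) -/(nsrc k u M') -/(nsrc k u t) e1 e2 => h3 h4.
by rewrite (_ : nsrc k u M == i) // eqn_leq h3 h4.
Qed.

(* For large k, the orderings with exactly i maximal paths satisfy this. *)
Definition settles k (w : OrdT B) :=
  (forall t, (i <= nsrc k w t)%N) /\ exists t, (nsrc k w t <= i)%N.

Lemma settles_still_hit k (Mt : nat -> nat) w : (forall t, t <= Mt t)%N ->
  valid_ord B w -> settles k w -> exists t, still_hit k t (Mt t) w.
Proof.
move=> Mtt vw [hlow hex].
case: (ex_minnP hex) => t0 h0 hmin; exists t0.
have e0 : nsrc k w t0 = i by apply/eqP; rewrite eqn_leq h0 hlow.
rewrite /still_hit /first_hit e0 eqxx /=; apply/andP; split.
  apply/forallP => t'; apply/negP => /eqP e.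
  by have := hmin t'; rewrite e leqnn => /(_ isT); rewrite leqNgt ltn_ord.
rewrite eqn_leq hlow andbT -e0.
exact: (card_sources_mono B HB w k t0 (Mt t0) (valid_block_all B w vw k _) (Mtt t0)).
Qed.

Lemma settles_covered k (del : rat) : 0 < del ->
  (forall M, (1 <= M)%N -> muG B k (k + M) i <= del) ->
  covered B (fun w => valid_ord B w /\ settles k w) (del + del).
Proof.
move=> dp ha.
have hM : forall t, exists M0, (maxn t 1 <= M0)%N /\ forall M, (M0 <= M)%N ->
    still_hit_meas k t M0 <= still_hit_meas k t M + del / 2 ^+ t.+1.
  move=> t; apply: nonincreasing_stable.
  - by move=> M _; apply: still_hit_meas_ge0.
  - move=> M M' /andP[h1 h2]; apply: still_hit_meas_mono; rewrite h2 andbT.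
    by apply: leq_trans h1; apply: leq_maxl.
  - by rewrite divr_gt0 // exprn_gt0.
have [Mt hMt] := choice _ hM.
have Mtt : forall t, (t <= Mt t)%N by move=> t; apply: leq_trans (hMt t).1; apply: leq_maxl.
apply: (covered_sub B _ (fun w => exists t,
          valid_below B w (k + Mt t) /\ still_hit k t (Mt t) w)).
  move=> w [vw hs]; have [t ht] := settles_still_hit k Mt w Mtt vw hs.
  by exists t; split=> // x _; apply: vw.
apply: (covered_union B _ (fun t => still_hit_meas k t (Mt t))).
  move=> t; rewrite /still_hit_meas -(integ_shift B _ _ _ (ord0T B)); last exact: still_hit_depends.
  apply: covered_finite => w w' ag; apply: still_hit_eq => // x hx; apply: ag; lia.
case=> [|J]; first by rewrite big_geq //; lra.
(* compare with the common time Ms >= all the M_t, t <= J *)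
pose Ms := maxn J.+1 (\max_(t < J.+1) Mt t).
have hMs : forall t, (t < J.+1)%N -> (Mt t <= Ms)%N.
  by move=> t ht; apply: leq_trans (leq_maxr _ _); exact: (leq_bigmax (Ordinal ht)).
apply: le_trans (_ : \sum_(0 <= t < J.+1) (still_hit_meas k t Ms + del / 2 ^+ t.+1) <= _).
  by apply: ler_sum_nat => t /andP[_ ht]; apply: (hMt t).2; apply: hMs.
rewrite big_split /=.
have := sum_still_hit_meas k J.+1 Ms; have := sum_geometric _ del J.+1 (ltW dp).
have := ha Ms (leq_trans (ltn0Sn J) (leq_maxl _ _)).
lra.
Qed.

Hypothesis all_converge : forall m, strictly_increasing m ->
  series_converges (fun k => muG B (m k) (m k.+1) i).

Lemma small_blocks_from del : 0 < del -> forall L,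
  exists k, (L <= k)%N /\ forall M, (1 <= M)%N -> muG B k (k + M) i <= del.
Proof.
move=> dp L; apply: NNPP => hno.
have hT : forall k, exists M, (L <= k)%N -> (1 <= M)%N /\ del < muG B k (k + M) i.
  move=> k; case: (boolP (L <= k)%N) => hk; last by exists 0%N.
  apply: NNPP => hh; apply: hno; exists k; split=> // M hM.
  by rewrite leNgt; apply/negP => hlt; apply: hh; exists M.
have [T hTT] := choice _ hT.
(* otherwise the consecutive large blocks form a divergent sequence *)
pose fix m j := if j is j'.+1 then (m j' + T (m j'))%N else L.
have mL : forall j, (L <= m j)%N by elim=> [|j IH] //=; exact: leq_trans IH (leq_addr _ _).
have msi : strictly_increasing m by move=> j /=; have := (hTT (m j) (mL j)).1; lia.
have [Mb hMb] := all_converge m msi.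
have hge : forall K, K%:R * del <= \sum_(k < K) muG B (m k) (m k.+1) i.
  move=> K; have -> : K%:R * del = \sum_(k < K) del by rewrite sumr_const card_ord mulr_natl.
  by apply: ler_sum => j _; exact: ltW (hTT (m j) (mL j)).2.
have [K hK] := archi_nat (Mb / del).
by have := hge K; have := hMb K; rewrite ltr_pdivrMr // in hK; lra.
Qed.

(* Almost no ordering has exactly i maximal paths: for large k it settles
   at i, and the k's with small blocks can be taken arbitrarily large. *)
Lemma exactly_null : null B (fun w => valid_ord B w /\ OBj B i w).
Proof.
move=> eps ep.
have hk : forall L, exists k, (L <= k)%N /\
    forall M, (1 <= M)%N -> muG B k (k + M) i <= eps / 2 ^+ L.+2.
  by move=> L; apply: small_blocks_from; rewrite divr_gt0 // exprn_gt0.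
have [kL hkL] := choice _ hk.
apply: (covered_sub B _ (fun w => exists L, valid_ord B w /\ settles (kL L) w)).
  move=> w [vw [l [hlen [hF [hnd [hc _]]]]]].
  have [L0 hL0] := card_sources_ge B w vw l hnd hF.
  have nsrcE : forall k t, nsrc k w t = #|sources B w k t|.
    by move=> k t; rewrite /nsrc (max_sources_sources B HB w) //; exact: valid_block_all.
  exists L0; split=> //; split.
    by move=> t; rewrite nsrcE -hlen; apply: hL0; exact: (hkL L0).1.
  by have [t ht] := card_sources_le B HB w vw l hc (kL L0); exists t; rewrite nsrcE -hlen.
apply: (covered_union B _ (fun L => eps / 2 ^+ L.+1)); last first.
  by move=> J; apply: sum_geometric; exact: ltW.
move=> L; apply: covered_le (settles_covered (kL L) (eps / 2 ^+ L.+2) _ (hkL L).2).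
  by rewrite [2 ^+ L.+2]exprS le_eqVlt; apply/orP; left; apply/eqP; field; rewrite expf_neq0.
by rewrite divr_gt0 // exprn_gt0.
Qed.

End ExactCount.

Lemma not_diverges_converges (a : nat -> rat) : ~ series_diverges a -> series_converges a.
Proof.
move=> h; apply: NNPP => h2; apply: h => M; apply: NNPP => h3; apply: h2.
by exists M => K; rewrite leNgt; apply/negP => h4; apply: h3; exists K.
Qed.

Lemma not_converges_diverges (a : nat -> rat) : ~ series_converges a -> series_diverges a.
Proof.
move=> h M; apply: NNPP => h3; apply: h.
by exists M => K; rewrite leNgt; apply/negP => h4; apply: h3; exists K.
Qed.

Section Characterization.
Variable B : bratteli.
Hypothesis HB : is_bratteli B.
Hypothesis HA : aperiodic B.

(* Aperiodicity gives a level with two edges, hence an invalid level ordering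
   (all edges in the same position) and a cylinder of measure 0. *)
Lemma null_cylinder : exists x0 : cyl B, cmeas B x0 = 0.
Proof.
have [x [px _]] := max_path_exists B HB (make_valid B (ord0T B)) (make_valid_valid B _).
have [y [py [_ hF]]] := HA x px [:: x].
have [n hn] : exists n, y n <> x n by inversion hF.
have ne2 : (1 < ne B n)%N.
  case: (ltnP 1 (ne B n)) => // h; exfalso; apply: hn; apply: val_inj => /=.
  by have := ltn_ord (y n); have := ltn_ord (x n); lia.
pose f : Lvl B n := [ffun _ => Ordinal ne2].
have fnot : f \notin LO B n.
  apply/negP; rewrite inE /valid_lvl => /andP[/forallP hlt /forallP hinj].
  have := hlt (x n); rewrite ffunE /= => /card_gt1P [e1 [e2 [e1in e2in ne12]]].
  rewrite !inE in e1in e2in.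
  have := (forallP (hinj e1)) e2; rewrite (eqP e1in) (eqP e2in) eqxx !ffunE eqxx /=.
  by rewrite (negbTE ne12).
exists (n.+1, upd B (ord0T B) n f); rewrite /cmeas /cyl_meas /= big_ord_recr /=.
by rewrite upd_same (negbTE fnot) mulr0.
Qed.

Lemma mu_one_null (A : OrdT B -> Prop) :
  mu_one B A <-> null B (fun w => valid_ord B w /\ ~ A w).
Proof.
split; first exact: null_of_mu_null.
by move=> h; apply: mu_null_of_null => //; exact: null_cylinder.
Qed.

Lemma not_null_both (A : OrdT B -> Prop) :
  null B (fun w => valid_ord B w /\ A w) -> ~ null B (fun w => valid_ord B w /\ ~ A w).
Proof.
move=> h1 h2; apply: (not_null_valid B).
apply: (null_sub B _ _ _ (null_or B _ _ h1 h2)) => w vw.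
by case: (classic (A w)) => h; [left|right].
Qed.

Notation diverges_along n i := (series_diverges (fun k => muG B (n k) (n k.+1) i)).
Notation converges_along n i := (series_converges (fun k => muG B (n k) (n k.+1) i)).

Lemma mu_one_OBj_necessary j : mu_one B (OBj B j) ->
  (exists n, strictly_increasing n /\ diverges_along n j) /\
  (forall i, (1 <= i < j)%N -> forall m, strictly_increasing m -> converges_along m i).
Proof.
rewrite mu_one_null => hn; split.
  (* otherwise almost no ordering has exactly j maximal paths *)
  apply: NNPP => hno; apply: (not_null_both (OBj B j)) hn.
  apply: (exactly_null B HB j) => m hm; apply: not_diverges_converges => hd.
  by apply: hno; exists m.
(* otherwise almost every ordering has fewer than j maximal paths *)
move=> i /andP[_ hij] m hm; apply: NNPP => hnc.
have h1 := many_max_paths_null B m i hm HB (not_converges_diverges _ hnc).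
apply: (not_null_both (OBj B j)) hn.
by apply: (null_sub B _ _ _ h1) => w [vw ho]; split=> //; exact: OBj_many_max_paths ho hij.
Qed.

Lemma mu_one_OBj_sufficient j :
  (exists n, strictly_increasing n /\ diverges_along n j) ->
  (forall i, (1 <= i < j)%N -> forall m, strictly_increasing m -> converges_along m i) ->
  mu_one B (OBj B j).
Proof.
move=> [n [hn hd]] hconv; rewrite mu_one_null.
have hfew : null B (fun w => exists i, (1 <= i < j)%N /\ valid_ord B w /\ OBj B i w).
  apply: (null_union B (fun i w => (1 <= i < j)%N /\ valid_ord B w /\ OBj B i w)) => i.
  case: (boolP (1 <= i < j)%N) => hi.
    by apply: (null_sub B _ _ _ (exactly_null B HB i (hconv i hi))) => w [_ h].
  move=> eps ep; exists (fun _ => [::]); split=> [w [] //|J].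
  by rewrite big1 ?ltW // => ? _; exact: big_nil.
apply: (null_sub B _ _ _ (null_or B _ _ (many_max_paths_null B n j hn HB hd) hfew)).
move=> w [vw hno]; case: (classify_OBj B HB w vw j hno) => [hm|[i [hi ho]]].
  by left.
by right; exists i.
Qed.

End Characterization.

Theorem mainTheorem18 (B : bratteli) (d : nat) :
  is_bratteli B -> aperiodic B -> is_rank B d ->
  (mu_one B (OBj B 1) <->
     exists n : nat -> nat, strictly_increasing n /\
       series_diverges (fun k => muG B (n k) (n k.+1) 1)) /\
  (forall j : nat, (1 < j <= d)%N ->
     (mu_one B (OBj B j) <->
        (exists n : nat -> nat, strictly_increasing n /\
           series_diverges (fun k => muG B (n k) (n k.+1) j)) /\
        (forall i : nat, (1 <= i < j)%N ->
           forall m : nat -> nat, strictly_increasing m ->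
             series_converges (fun k => muG B (m k) (m k.+1) i)))).
Proof.
move=> HB HA _; split.
  (* for j = 1 the convergence condition is vacuous *)
  split=> [/(mu_one_OBj_necessary B HB HA 1) [] //|hdiv].
  by apply: mu_one_OBj_sufficient => // i /andP[h1 h2]; lia.
move=> j _; split=> [|[hdiv hconv]]; first exact: mu_one_OBj_necessary.
exact: mu_one_OBj_sufficient.
Qed.
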